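(* Let $A$ be a unital algebra over a field $F$ with $\operatorname{char}(F)\neq2$, and let $\mathcal{A}=M_n(A)$, $n\ge 2$, be the algebra of $n\times n$ matrices over $A$. Then $\operatorname{QJCent}(\mathcal{A})=\operatorname{Cent}(\mathcal{A})$.
   Context: $x\circ y=xy+yx$. $\operatorname{QJCent}(\mathcal{A})$: linear $f:\mathcal{A}\to\mathcal{A}$ with $f(x)\circ y=x\circ f(y)$ for all $x,y\in\mathcal{A}$. $\operatorname{Cent}(\mathcal{A})$: linear $f$ with $f(xy)=f(x)y=xf(y)$ for all $x,y$. *)

From mathcomp Require Import all_boot all_algebra.
Set Implicit Arguments. Unset Strict Implicit. Unset Printing Implicit Defensive.
Import GRing.Theory.
Local Open Scope ring_scope.

Definition scalemxF (F : fieldType) (A : algType F) (n : nat) (c : F)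
  (X : 'M[A]_n) : 'M[A]_n := map_mx (fun a => c *: a) X.

Definition F_linear (F : fieldType) (A : algType F) (n : nat)
  (f : 'M[A]_n -> 'M[A]_n) : Prop :=
  (forall X Y, f (X + Y) = f X + f Y) /\
  (forall (c : F) X, f (scalemxF c X) = scalemxF c (f X)).

Definition jprod (F : fieldType) (A : algType F) (n : nat) (X Y : 'M[A]_n) :
  'M[A]_n := X *m Y + Y *m X.

Definition QJCent (F : fieldType) (A : algType F) (n : nat)
  (f : 'M[A]_n -> 'M[A]_n) : Prop :=
  F_linear f /\ forall X Y, jprod (f X) Y = jprod X (f Y).

Definition Cent (F : fieldType) (A : algType F) (n : nat)
  (f : 'M[A]_n -> 'M[A]_n) : Prop :=
  F_linear f /\ forall X Y, f (X *m Y) = f X *m Y /\ f (X *m Y) = X *m f Y.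

(* Putting y = 1 in the Jordan identity gives 2 f(x) = x t + t x with t = f(1), and
   substituting this back shows that t commutes with every commutator xy - yx.  In
   M_n(A) with n >= 2 every off-diagonal unit a E_ij is the commutator of a E_ii and
   E_ij, which forces t to be a scalar matrix with central entry.  Hence
   2 f(x) = 2 t x, and dividing by 2 shows that f is multiplication by a central
   element, i.e. f lies in the centroid. *)
From mathcomp Require Import all_boot all_algebra.
Local Open Scope ring_scope.
Import GRing.Theory.

Lemma jordan_commutatorE (S : pzRingType) (t x y : S) :
  (x * t + t * x) * y + y * (x * t + t * x) - (x * (y * t + t * y) + (y * t + t * y) * x)
  = t * (x * y - y * x) - (x * y - y * x) * t.
Proof.
rewrite mulrBl mulrBr !mulrDl !mulrDr !mulrA opprD !opprB !opprD !addrA.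
(* Bring x t y and y t x next to their opposites. *)
by rewrite [LHS](@GRing.add S).[ACl (1*6)*(4*7)*2*8*3*5] !subrr !add0r.
Qed.

Section JordanCentroid.
Variables (S : pzRingType) (f : S -> S).

Lemma centroid_jordan :
  (forall x y, f (x * y) = f x * y /\ f (x * y) = x * f y) ->
  forall x y, f x * y + y * f x = x * f y + f y * x.
Proof. by move=> cf x y; rewrite -(cf x y).1 -(cf y x).2 (cf x y).2 (cf y x).1. Qed.

Hypothesis jordanf : forall x y, f x * y + y * f x = x * f y + f y * x.

Lemma jordan_double x : f x *+ 2 = x * f 1 + f 1 * x.
Proof. by have := jordanf x 1; rewrite mulr1 mul1r mulr2n. Qed.

Lemma jordan_commutator x y : f 1 * (x * y - y * x) = (x * y - y * x) * f 1.
Proof.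
apply/eqP; rewrite -subr_eq0 -jordan_commutatorE -!jordan_double.
by rewrite !mulrnAl !mulrnAr -!mulrnDl jordanf subrr.
Qed.

Lemma jordan_centroid :
  (forall x, f 1 * x = x * f 1) -> (forall x : S, x *+ 2 = 0 -> x = 0) ->
  forall x y, f (x * y) = f x * y /\ f (x * y) = x * f y.
Proof.
move=> central1 two_torsion_free.
have fE x : f x = f 1 * x.
  apply/eqP; rewrite -subr_eq0; apply/eqP/two_torsion_free.
  by rewrite mulrnBl jordan_double central1 mulr2n subrr.
move=> x y; rewrite (fE (x * y)) (fE x) (fE y) mulrA.
by split=> //; rewrite central1 -mulrA.
Qed.

End JordanCentroid.

Lemma lmod_mulrn2_eq0 (F : fieldType) (V : lmodType F) :
  (2%:R : F) != 0 -> forall v : V, v *+ 2 = 0 -> v = 0.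
Proof.
move=> two_neq0 v v2.
by rewrite -[v]scale1r -(mulVf two_neq0) -scalerA scaler_nat v2 scaler0.
Qed.

Lemma mx_mulrn2_eq0 (R : nmodType) (m n : nat) :
  (forall a : R, a *+ 2 = 0 -> a = 0) -> forall M : 'M[R]_(m, n), M *+ 2 = 0 -> M = 0.
Proof.
move=> two_torsion_free M M2; apply/matrixP => i j.
have := congr1 (fun N : 'M[R]_(m, n) => N i j) M2.
by rewrite /= mulmxnE !mxE => /two_torsion_free.
Qed.

Section MatrixUnits.
Context {R : pzRingType} {n : nat}.
Implicit Types (a : R) (M : 'M[R]_n).

Lemma mul_scale_delta_mxE a (i j k l : 'I_n) M :
  ((a *: delta_mx i j) *m M) k l = if k == i then a * M j l else 0.
Proof.
rewrite mxE (bigD1 j) //= big1 => [|p pj]; rewrite !mxE.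
  by rewrite eqxx andbT addr0; case: (k == i); rewrite ?mulr1 ?mulr0 ?mul0r.
by rewrite (negbTE pj) andbF mulr0 mul0r.
Qed.

Lemma mul_mx_scale_deltaE a (i j k l : 'I_n) M :
  (M *m (a *: delta_mx i j)) k l = if l == j then M k i * a else 0.
Proof.
rewrite mxE (bigD1 i) //= big1 => [|p pi]; rewrite !mxE.
  by rewrite eqxx /= addr0; case: (l == j); rewrite ?mulr1 ?mulr0.
by rewrite (negbTE pi) /= !mulr0.
Qed.

Lemma scale_delta_mx_commutator a {i j : 'I_n} : i != j ->
  (a *: delta_mx i i) *m delta_mx i j - delta_mx i j *m (a *: delta_mx i i)
  = a *: delta_mx i j.
Proof.
move=> ij; rewrite -scalemxAl mul_delta_mx.
have -> : delta_mx i j *m (a *: delta_mx i i) = 0.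
  apply/matrixP => k l; rewrite mul_mx_scale_deltaE !mxE (negbTE ij) andbF mul0r.
  by case: ifP.
by rewrite subr0.
Qed.

Lemma central_scalar_mxC (c : R) M : (forall a, c * a = a * c) -> c%:M *m M = M *m c%:M.
Proof.
move=> central_c; apply/matrixP => k l; rewrite mul_scalar_mx !mxE.
rewrite (bigD1 l) //= big1 => [|p pl]; rewrite !mxE.
  by rewrite eqxx mulr1n addr0 central_c.
by rewrite (negbTE pl) mulr0n mulr0.
Qed.

End MatrixUnits.

Section OffDiagonalCommutant.
Variables (R : pzRingType) (n : nat) (T : 'M[R]_n.+2).
Hypothesis commT : forall a (i j : 'I_n.+2),
  i != j -> T *m (a *: delta_mx i j) = (a *: delta_mx i j) *m T.

Lemma offdiag_commutant_offdiag {k i : 'I_n.+2} : k != i -> T k i = 0.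
Proof.
move=> ki; have ik : i != k by rewrite eq_sym.
have := congr1 (fun M : 'M[R]_n.+2 => M k k) (commT 1 i k ik).
by rewrite /= mul_mx_scale_deltaE mul_scale_delta_mxE eqxx (negbTE ki) mulr1.
Qed.

Lemma offdiag_commutant_diag a {i j : 'I_n.+2} : i != j -> T i i * a = a * T j j.
Proof.
move=> ij; have := congr1 (fun M : 'M[R]_n.+2 => M i j) (commT a i j ij).
by rewrite /= mul_mx_scale_deltaE mul_scale_delta_mxE !eqxx.
Qed.

Lemma offdiag_commutant_diag_central (i : 'I_n.+2) a : T i i * a = a * T i i.
Proof.
have [j ij] : exists j, i != j.
  by case: (eqVneq i ord0) => [->|i0]; [exists ord_max | exists ord0].
have Tij := offdiag_commutant_diag 1 ij; rewrite mulr1 mul1r in Tij.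
by rewrite (offdiag_commutant_diag a ij) -Tij.
Qed.

Lemma offdiag_commutant_scalar : T = (T ord0 ord0)%:M.
Proof.
apply/matrixP => k l; rewrite mxE; case: (eqVneq k l) => [<-|kl].
  case: (eqVneq k ord0) => [->|k0]; first by rewrite mulr1n.
  by have := offdiag_commutant_diag 1 k0; rewrite mulr1 mul1r mulr1n.
by rewrite mulr0n offdiag_commutant_offdiag.
Qed.

Lemma offdiag_commutant_central M : T *m M = M *m T.
Proof.
rewrite offdiag_commutant_scalar central_scalar_mxC //.
exact: offdiag_commutant_diag_central.
Qed.

End OffDiagonalCommutant.

Lemma commutator_commutant_central (R : pzRingType) (n : nat) (T : 'M[R]_n.+2) :
  (forall X Y, T *m (X *m Y - Y *m X) = (X *m Y - Y *m X) *m T) ->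
  forall X, T *m X = X *m T.
Proof.
move=> commT; apply: offdiag_commutant_central => a i j ij.
by rewrite -(scale_delta_mx_commutator a ij) commT.
Qed.

Theorem proposition3p4 (F : fieldType) (A : algType F) (n : nat)
  (hn : (2 <= n)%N) (hchar : (2%:R : F) != 0) :
  forall f : 'M[A]_n -> 'M[A]_n, QJCent f <-> Cent f.
Proof.
case: n hn => [|[|n]] // _ f.
rewrite /QJCent /Cent /jprod mulmxE.
split=> [[linf jordanf] | [linf centf]]; split=> //; last exact: centroid_jordan.
apply: jordan_centroid => //.
  rewrite -mulmxE; apply: commutator_commutant_central => X Y.
  by rewrite mulmxE jordan_commutator.
exact/mx_mulrn2_eq0/lmod_mulrn2_eq0.
Qed.
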